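(* Let $\gamma\in(1,2]$ and let $(\rho_L,u_L,p_L)$, $(\rho_R,u_R,p_R)$ be two states with $\rho_K,p_K>0$, $u_K\in\mathbb R^d$, $m_K=\rho_Ku_K$, $a_K=\sqrt{\gamma p_K/\rho_K}$. With $\langle f\rangle=\frac{f_L+f_R}2$ and $[\![f]\!]=f_R-f_L$, it holds $$\langle|u|^2\rangle\le(\|\langle u\rangle\|+\|[\![u]\!]\|)^2,\quad\langle a^2\rangle\le2\langle a\rangle^2,\quad\langle p\rangle\langle\rho\rangle^{-1}\le\frac4\gamma\langle a\rangle^2,$$ $$\langle\rho|u|^2\rangle\langle\rho\rangle^{-1}\le2(\|\langle u\rangle\|+\|[\![u]\!]\|)^2,\quad\|\langle m\rangle\|\langle\rho\rangle^{-1}\le\|\langle u\rangle\|+\frac12\|[\![u]\!]\|.$$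
   Context: $\|\cdot\|$ denotes the $\ell^1$ norm of a vector in $\mathbb R^d$. *)

From HB Require Import structures.
From mathcomp Require Import all_boot all_order all_algebra.
Set Implicit Arguments. Unset Strict Implicit. Unset Printing Implicit Defensive.
Import Order.TTheory GRing.Theory Num.Theory.
Local Open Scope ring_scope.

Definition l1norm (R : realDomainType) (d : nat) (v : 'rV[R]_d) : R :=
  \sum_(i < d) `|v 0 i|.

Definition sqnorm (R : ringType) (d : nat) (v : 'rV[R]_d) : R :=
  \sum_(i < d) (v 0 i) ^+ 2.

Definition avg (R : fieldType) (fL fR : R) : R := (fL + fR) / 2.
Definition jump (R : ringType) (fL fR : R) : R := fR - fL.

Definition vavg (R : fieldType) (d : nat) (uL uR : 'rV[R]_d) : 'rV[R]_d :=
  (2%:R)^-1 *: (uL + uR).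
Definition vjump (R : ringType) (d : nat) (uL uR : 'rV[R]_d) : 'rV[R]_d :=
  uR - uL.

Definition sound (R : rcfType) (gamma rho p : R) : R :=
  Num.sqrt (gamma * p / rho).

From HB Require Import structures.
From mathcomp Require Import all_boot all_order all_algebra.
From mathcomp Require Import ring lra.
Set Implicit Arguments.
Unset Strict Implicit.
Unset Printing Implicit Defensive.
Import Order.TTheory GRing.Theory Num.Theory.
Local Open Scope ring_scope.

(* Each left-hand side except the second is a mean of a left and a right
   value, weighted by 1 or by rho_K, so it is bounded by any common bound of the
   two values.  Since u_L = <u> - [[u]]/2 and u_R = <u> + [[u]]/2, both
   velocities have l1 norm at most |<u>| + |[[u]]|/2, and |u|^2 <= |u|_1^2; the
   triangle inequality gives |<m>| <= <rho |u|_1>.  For the pressures,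
   p_K = rho_K a_K^2 / gamma and a_K^2 <= (a_L + a_R)^2 = 4 <a>^2.  The second
   inequality is just 2 a_L a_R >= 0. *)

Section Averages.
Variable R : realFieldType.

Lemma avg_le (x y M : R) : x <= M -> y <= M -> avg x y <= M.
Proof. by rewrite /avg; lra. Qed.

Lemma weighted_avg_le (a b x y M : R) : 0 < a -> 0 < b -> x <= M -> y <= M ->
  avg (a * x) (b * y) / avg a b <= M.
Proof.
move=> a_gt0 b_gt0 xM yM; rewrite ler_pdivrMr /avg; last by lra.
have : a * x <= a * M by rewrite ler_pM2l.
have : b * y <= b * M by rewrite ler_pM2l.
by lra.
Qed.

Lemma avg_sqr_le (a b : R) : 0 <= a * b -> avg (a ^+ 2) (b ^+ 2) <= 2 * avg a b ^+ 2.
Proof. by rewrite /avg; nra. Qed.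

End Averages.

Section L1Norm.
Variables (R : realFieldType) (d : nat).
Implicit Types u v : 'rV[R]_d.

Lemma l1norm_ge0 v : 0 <= l1norm v.
Proof. exact: sumr_ge0. Qed.

Lemma l1normD u v : l1norm (u + v) <= l1norm u + l1norm v.
Proof. by rewrite /l1norm -big_split ler_sum // => i _; rewrite mxE ler_normD. Qed.

Lemma l1normZ (c : R) v : l1norm (c *: v) = `|c| * l1norm v.
Proof. by rewrite /l1norm mulr_sumr; apply: eq_bigr => i _; rewrite mxE normrM. Qed.

Lemma l1normN v : l1norm (- v) = l1norm v.
Proof. by rewrite -scaleN1r l1normZ normrN normr1 mul1r. Qed.

Lemma sqnorm_le_l1norm v : sqnorm v <= l1norm v ^+ 2.
Proof.
rewrite /sqnorm [l1norm v ^+ 2]expr2 {1}/l1norm mulr_suml ler_sum // => i _.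
rewrite -(real_normK (num_real _)) expr2 ler_wpM2l //.
by rewrite /l1norm (bigD1 i) //= lerDl sumr_ge0.
Qed.

Lemma sqnorm_le_sqr v (M : R) : 0 <= M -> l1norm v <= M -> sqnorm v <= M ^+ 2.
Proof.
move=> M_ge0 vM; apply: le_trans (sqnorm_le_l1norm v) _.
by rewrite ler_sqr // nnegrE l1norm_ge0.
Qed.

Lemma vavgC u v : vavg u v = vavg v u.
Proof. by rewrite /vavg addrC. Qed.

Lemma l1norm_vjumpC u v : l1norm (vjump u v) = l1norm (vjump v u).
Proof. by rewrite /vjump -opprB l1normN. Qed.

Lemma l1norm_vavg_le u v : l1norm (vavg u v) <= avg (l1norm u) (l1norm v).
Proof.
rewrite /vavg l1normZ ger0_norm ?invr_ge0 ?ler0n // /avg mulrC.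
by rewrite ler_wpM2r ?invr_ge0 ?ler0n ?l1normD.
Qed.

Lemma l1norm_right_le u v :
  l1norm v <= l1norm (vavg u v) + 2^-1 * l1norm (vjump u v).
Proof.
rewrite {1}(_ : v = vavg u v + 2^-1 *: vjump u v); last first.
  by apply/rowP => i; rewrite !mxE; field.
by rewrite (le_trans (l1normD _ _)) // lerD2l l1normZ ger0_norm ?invr_ge0 ?ler0n.
Qed.

Lemma l1norm_left_le u v :
  l1norm u <= l1norm (vavg u v) + 2^-1 * l1norm (vjump u v).
Proof. by rewrite vavgC l1norm_vjumpC l1norm_right_le. Qed.

End L1Norm.

Lemma sound_ge0 (R : rcfType) (gamma rho p : R) : 0 <= sound gamma rho p.
Proof. exact: sqrtr_ge0. Qed.

Lemma pressure_sound (R : rcfType) (gamma rho p : R) :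
  0 < gamma -> 0 < rho -> 0 <= p -> p = rho * (sound gamma rho p ^+ 2 / gamma).
Proof.
move=> gamma_gt0 rho_gt0 p_ge0.
rewrite /sound sqr_sqrtr; last by rewrite divr_ge0 ?mulr_ge0 // ltW.
by field; apply/andP; rewrite !gt_eqF.
Qed.

Theorem lemmaA1 (R : rcfType) (d : nat) (gamma : R)
  (rhoL pL rhoR pR : R) (uL uR : 'rV[R]_d) :
  1 < gamma -> gamma <= 2 ->
  0 < rhoL -> 0 < pL -> 0 < rhoR -> 0 < pR ->
  let mL := rhoL *: uL in
  let mR := rhoR *: uR in
  let aL := sound gamma rhoL pL in
  let aR := sound gamma rhoR pR in
  let U := l1norm (vavg uL uR) + l1norm (vjump uL uR) in
  [/\ avg (sqnorm uL) (sqnorm uR) <= U ^+ 2,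
      avg (aL ^+ 2) (aR ^+ 2) <= 2 * (avg aL aR) ^+ 2,
      avg pL pR / avg rhoL rhoR <= 4 / gamma * (avg aL aR) ^+ 2,
      avg (rhoL * sqnorm uL) (rhoR * sqnorm uR) / avg rhoL rhoR <= 2 * U ^+ 2
    & l1norm (vavg mL mR) / avg rhoL rhoR
        <= l1norm (vavg uL uR) + 2^-1 * l1norm (vjump uL uR)].
Proof.
move=> gamma_gt1 _ rhoL_gt0 pL_gt0 rhoR_gt0 pR_gt0 mL mR aL aR U.
have gamma_gt0 : 0 < gamma := lt_trans ltr01 gamma_gt1.
set W := l1norm (vavg uL uR) + 2^-1 * l1norm (vjump uL uR).
have U_ge0 : 0 <= U by rewrite addr_ge0 ?l1norm_ge0.
have W_le_U : W <= U.
  by rewrite lerD2l ler_piMl ?l1norm_ge0 // invf_le1 ?ler1n.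
have sqnorm_le (K : 'rV[R]_d) : l1norm K <= W -> sqnorm K <= U ^+ 2.
  by move=> KW; rewrite sqnorm_le_sqr // (le_trans KW).
have sqnormL := sqnorm_le _ (l1norm_left_le uL uR).
have sqnormR := sqnorm_le _ (l1norm_right_le uL uR).
have aL_ge0 : 0 <= aL := sound_ge0 gamma rhoL pL.
have aR_ge0 : 0 <= aR := sound_ge0 gamma rhoR pR.
split.
- exact: avg_le.
- by rewrite avg_sqr_le ?mulr_ge0.
- have -> : 4 / gamma * avg aL aR ^+ 2 = (aL + aR) ^+ 2 / gamma.
    by rewrite /avg; field; rewrite gt_eqF.
  have sound_le a : 0 <= a -> a <= aL + aR -> a ^+ 2 / gamma <= (aL + aR) ^+ 2 / gamma.
    by move=> a_ge0 a_le; rewrite ler_pM2r ?invr_gt0 // ler_sqr // nnegrE addr_ge0.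
  rewrite (pressure_sound gamma_gt0 rhoL_gt0 (ltW pL_gt0)).
  rewrite (pressure_sound gamma_gt0 rhoR_gt0 (ltW pR_gt0)).
  by rewrite weighted_avg_le ?sound_le ?sound_ge0 ?lerDl ?lerDr.
- apply: le_trans (weighted_avg_le rhoL_gt0 rhoR_gt0 sqnormL sqnormR) _.
  by rewrite ler_peMl ?sqr_ge0 ?ler1n.
- have := weighted_avg_le rhoL_gt0 rhoR_gt0 (l1norm_left_le uL uR) (l1norm_right_le uL uR).
  apply: le_trans.
  rewrite ler_pM2r ?invr_gt0; last by rewrite /avg; lra.
  by rewrite (le_trans (l1norm_vavg_le _ _)) // !l1normZ !gtr0_norm.
Qed.
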